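(* Let $p$ be a binary-coded probability distribution and fix an integer $n\ge1$. Run the algorithm GenOpt described below on $p$. Let $B_n$ denote the first $n$ bits appended to $b$, and $C_n$ the number of random bits drawn up to and including the point when the $n$-th bit is appended. Then for all $s\in\{0,1\}^n$ and $\ell\ge0$, $\Pr(B_n=s,\,C_n=\ell)=2^{-\ell}\,\mathbf{1}\big[[p(s)]_\ell=1\big]$.
   Context: A binary-coded probability distribution is a map $p:\{0,1\}^*\to[0,1]$ with $p(\varepsilon)=1$ ($\varepsilon$ the empty string) and $p(b)=p(b0)+p(b1)$ for every finite binary string $b$. Every real $z\in[0,1]$ has a unique concise binary expansion $z=(z_0.z_1z_2\ldots)_2=\sum_{i\ge0}z_i2^{-i}$ not ending in an infinite string of 1s; write $[z]_i:=z_i$. Algorithm GenOpt: it maintains a string $b$ (initially empty) and a counter $\ell$ (initially $0$) of fair random bits drawn, and repeats forever the following round, which appends one bit to $b$: if $[p(b0)]_\ell=1$ and $[p(b1)]_\ell=0$, append $0$; else if $[p(b0)]_\ell=0$ and $[p(b1)]_\ell=1$, append $1$; otherwise repeat: draw a fair random bit $x$ and set $\ell\leftarrow\ell+1$; if $x=0$ and $[p(b0)]_\ell=1$, append $0$ and end the round; if $x=1$ and $[p(b1)]_\ell=1$, append $1$ and end the round. *)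

From HB Require Import structures.
From mathcomp Require Import all_boot all_order all_algebra.
From mathcomp Require Import reals.
Set Implicit Arguments. Unset Strict Implicit. Unset Printing Implicit Defensive.
Import Order.TTheory GRing.Theory Num.Theory.
Local Open Scope ring_scope.

(* Binary-coded probability distribution on finite binary strings (seq bool).
   b0 is [rcons b false], b1 is [rcons b true]; values lie in [0,1]. *)
Definition bcpd (R : realType) (p : seq bool -> R) : Prop :=
  p [::] = 1 /\
  (forall b, 0 <= p b <= 1) /\
  (forall b, p b = p (rcons b false) + p (rcons b true)).

(* [z]_i : i-th digit of the concise binary expansion z = sum_i z_i 2^-i
   (z in [0,1]); z_i = floor(2^i z) mod 2. *)
Definition digit (R : realType) (z : R) (i : nat) : bool :=
  ((Num.floor (z * 2 ^+ i) %% 2)%Z == 1%Z).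

(* Returns (appended bit, new counter, remaining bits), or None if the
   supply of bits xs is exhausted before the round ends. *)
Fixpoint draw (R : realType) (p : seq bool -> R) (b : seq bool) (l : nat)
    (xs : seq bool) : option (bool * nat * seq bool) :=
  match xs with
  | [::] => None
  | x :: xs' =>
      if ~~ x && digit (p (rcons b false)) l.+1 then Some (false, l.+1, xs')
      else if x && digit (p (rcons b true)) l.+1 then Some (true, l.+1, xs')
      else draw p b l.+1 xs'
  end.

Definition round (R : realType) (p : seq bool -> R) (b : seq bool) (l : nat)
    (xs : seq bool) : option (bool * nat * seq bool) :=
  if digit (p (rcons b false)) l && ~~ digit (p (rcons b true)) l
  then Some (false, l, xs)
  else if ~~ digit (p (rcons b false)) l && digit (p (rcons b true)) l
  then Some (true, l, xs)
  else draw p b l xs.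

(* First n rounds of GenOpt from b = empty, l = 0, fed with random bits xs.
   Returns (B_n, C_n, unused bits) or None if xs runs out. *)
Fixpoint run (R : realType) (p : seq bool -> R) (n : nat) (xs : seq bool)
    : option (seq bool * nat * seq bool) :=
  match n with
  | 0 => Some ([::], 0%N, xs)
  | n'.+1 =>
      match run p n' xs with
      | None => None
      | Some (b, l, r) =>
          match round p b l r with
          | None => None
          | Some (c, l', r') => Some (rcons b c, l', r')
          end
      end
  end.

(* Pr(B_n = s, C_n = l) when the random bits are i.i.d. fair: the event
   {B_n = s, C_n = l} is the cylinder set of those length-l prefixes xs on
   which the first n rounds finish using exactly all l bits and produce s;
   each such prefix has probability 2^-l. *)
Definition prob_BC (R : realType) (p : seq bool -> R) (n : nat)
    (s : seq bool) (l : nat) : R :=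
  #|[set xs : l.-tuple bool | run p n xs == Some (s, l, [::])]|%:R / 2 ^+ l.

From HB Require Import structures.
From mathcomp Require Import all_boot all_order all_algebra.
From mathcomp Require Import reals.
From mathcomp Require Import zify ring lra.
Set Implicit Arguments. Unset Strict Implicit. Unset Printing Implicit Defensive.
Import Order.TTheory GRing.Theory Num.Theory.

(* We count inputs instead of computing probabilities.  Say that a string of
   j fair bits reaches b if the first |b| rounds of GenOpt, fed with it, output
   b, possibly leaving bits unused.  By induction on |b|, exactly
   floor(2^j p(b)) strings of length j reach b.  For the round that follows b,
   an induction on j shows that the strings on which this round is still
   running are counted by the carry
     floor(2^j p(b)) - floor(2^j p(b0)) - floor(2^j p(b1)),
   which is 0 or 1 because p(b) = p(b0) + p(b1); from j to j + 1, the digits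
   of p(b), p(b0) and p(b1) at level j + 1 decide how the running strings and
   the strings that have just reached b split into those reaching b0, those
   reaching b1 and those still running.  Finally, the strings of length j that
   reach b using all their bits number
   floor(2^j p(b)) - 2 floor(2^(j-1) p(b)) = [p(b)]_j. *)

Lemma rcons_eq_nil (T : eqType) (s : seq T) x : (rcons s x == [::]) = false.
Proof. by case: s. Qed.

Fixpoint bitstrings j : seq (seq bool) :=
  if j is j'.+1 then
    [seq rcons s false | s <- bitstrings j'] ++ [seq rcons s true | s <- bitstrings j']
  else [:: [::]].

Lemma mem_bitstrings j s : (s \in bitstrings j) = (size s == j).
Proof.
elim: j s => [|j IHj] s; first by case: s.
case/lastP: s => [|s x] /=; rewrite mem_cat.
  by apply/negbTE/norP; split; apply/mapP => -[s' _ /esym/eqP]; rewrite rcons_eq_nil.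
rewrite size_rcons eqSS -IHj; apply/orP/idP => [[] /mapP[s' _ /rcons_inj[-> _]] //|].
by case: x => Hs; [right | left]; apply: map_f.
Qed.

Lemma bitstrings_uniq j : uniq (bitstrings j).
Proof.
elim: j => //= j IHj; rewrite cat_uniq !map_inj_uniq ?IHj //=; try exact: rcons_injl.
rewrite andbT; apply/hasPn => _ /mapP[s _ ->].
by apply/negP => /mapP[s' _ /rcons_inj[]].
Qed.

Lemma size_bitstrings j : size (bitstrings j) = (2 ^ j)%N.
Proof. by elim: j => //= j IHj; rewrite size_cat !size_map IHj expnS mul2n addnn. Qed.

Lemma card_tuple_bitstrings j (P : pred (seq bool)) :
  #|[set t : j.-tuple bool | P t]| = count P (bitstrings j).
Proof.
have perm_bits : perm_eq (map val (enum {: j.-tuple bool})) (bitstrings j).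
  apply: uniq_perm; rewrite ?bitstrings_uniq ?(map_inj_uniq val_inj) ?enum_uniq // => s.
  rewrite mem_bitstrings; apply/mapP/eqP => [[t _ ->]|Hs]; first exact: size_tuple.
  by exists (Tuple (introT eqP Hs)); rewrite ?mem_enum.
rewrite -(permP perm_bits) count_map enumT cardE /enum_mem size_filter.
by apply: eq_count => t; exact: in_set.
Qed.

Lemma count_sum (T : Type) (a : pred T) (s : seq T) : count a s = \sum_(x <- s) a x.
Proof. by rewrite -sum1_count big_mkcond. Qed.

Lemma count_bitstringsS j (P : pred (seq bool)) : count P (bitstrings j.+1) =
  \sum_(s <- bitstrings j) (P (rcons s false) + P (rcons s true)).
Proof. by rewrite /= count_cat !count_map !count_sum -big_split. Qed.

Section Rounds.
Variables (R : realType) (p : seq bool -> R).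

Lemma draw_cat b l xs ys c l' r : draw p b l xs = Some (c, l', r) ->
  draw p b l (xs ++ ys) = Some (c, l', r ++ ys).
Proof.
elim: xs l => [|x xs IHxs] l //=.
by case: ifP => _; [case=> <- <- <- | case: ifP => _; [case=> <- <- <- | exact: IHxs]].
Qed.

Lemma draw_size b l xs c l' r : draw p b l xs = Some (c, l', r) ->
  (l' + size r = l + size xs)%N.
Proof.
elim: xs l => [|x xs IHxs] l //=.
case: ifP => _; [by case=> _ <- <-; rewrite addSnnS | case: ifP => _].
  by case=> _ <- <-; rewrite addSnnS.
by move/IHxs; rewrite addSnnS.
Qed.

Lemma draw_rcons b l xs x : draw p b l xs = None ->
  draw p b l (rcons xs x) = draw p b (l + size xs) [:: x].
Proof.
elim: xs l => [|y xs IHxs] l /=; first by rewrite addn0.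
by case: ifP => // _; case: ifP => // _ /IHxs ->; rewrite addSnnS.
Qed.

Lemma draw_single b l x c l' r : draw p b l [:: x] = Some (c, l', r) ->
  (l', r) = (l.+1, [::]).
Proof. by rewrite /=; case: ifP => _; [case=> _ <- <- | case: ifP => _ // [_ <- <-]]. Qed.

Lemma round_cat b l xs ys c l' r : round p b l xs = Some (c, l', r) ->
  round p b l (xs ++ ys) = Some (c, l', r ++ ys).
Proof.
rewrite /round; case: ifP => _; first by case=> <- <- <-.
case: ifP => _; [by case=> <- <- <- | exact: draw_cat].
Qed.

Lemma round_size b l xs c l' r : round p b l xs = Some (c, l', r) ->
  (l' + size r = l + size xs)%N.
Proof.
rewrite /round; case: ifP => _; first by case=> _ <- <-.
case: ifP => _; [by case=> _ <- <- | exact: draw_size].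
Qed.

Lemma round_rcons b l xs x : round p b l xs = None ->
  round p b l (rcons xs x) = draw p b (l + size xs) [:: x].
Proof. by rewrite /round; case: ifP => // _; case: ifP => // _; exact: draw_rcons. Qed.

Lemma round_nil b l c l' r : round p b l [::] = Some (c, l', r) -> (l', r) = (l, [::]).
Proof. by rewrite /round; case: ifP => _; [case=> _ <- <- | case: ifP => _ // [_ <- <-]]. Qed.

Lemma run_nil n b l r : run p n [::] = Some (b, l, r) -> (l, r) = (0%N, [::]).
Proof.
elim: n b l r => [|n IHn] b l r /=; first by case=> _ <- <-.
case En: (run p n [::]) => [[[b' l'] r']|] //.
case: (IHn _ _ _ En) => -> ->.
case Er: (round p b' 0 [::]) => [[[c l''] r'']|] // [_ <- <-].
exact: round_nil Er.
Qed.

Variant run_rcons_spec (ys : seq bool) (x : bool) :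
  option (seq bool * nat * seq bool) -> option (seq bool * nat * seq bool) -> Prop :=
| RunEndedBefore b l r of (l + size r = size ys)%N :
    run_rcons_spec ys x (Some (b, l, r)) (Some (b, l, rcons r x))
| RunUnfinished : run_rcons_spec ys x None None
| RunEndsAtLast b : run_rcons_spec ys x None (Some (b, (size ys).+1, [::])).

Lemma run_rconsP n ys x : run_rcons_spec ys x (run p n ys) (run p n (rcons ys x)).
Proof.
elim: n => [|n IHn] /=; first exact: RunEndedBefore.
case: IHn => [b l r Hsize | | b]; last 2 first.
- exact: RunUnfinished.
- case Er: (round p b (size ys).+1 [::]) => [[[c l'] r']|]; last exact: RunUnfinished.
  by case: (round_nil Er) => -> ->; apply: RunEndsAtLast.
case Er: (round p b l r) => [[[c l'] r']|].
  rewrite -[rcons r x]cats1 (round_cat _ Er) cats1; apply: RunEndedBefore.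
  by rewrite (round_size Er).
rewrite (round_rcons _ Er) Hsize.
case Ed: (draw p b (size ys) [:: x]) => [[[c l'] r']|]; last exact: RunUnfinished.
by case: (draw_single Ed) => -> ->; apply: RunEndsAtLast.
Qed.

Definition reached n b xs : bool :=
  if run p n xs is Some (b', _, _) then b' == b else false.

Definition reached_exactly n b xs : bool := run p n xs == Some (b, size xs, [::]).

Definition pending n b xs : bool :=
  if run p n xs is Some (b', l, r) then (b' == b) && (round p b' l r == None) else false.

Definition outputs (c : bool) (o : option (bool * nat * seq bool)) : bool :=
  if o is Some (c', _, _) then c' == c else false.

Lemma reachedS n b c xs : reached n.+1 (rcons b c) xs =
  if run p n xs is Some (b', l, r) then (b' == b) && outputs c (round p b' l r) else false.
Proof.
rewrite /reached /=; case: (run p n xs) => [[[b' l] r]|] //.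
by case: (round p b' l r) => [[[c' l'] r']|]; rewrite ?eqseq_rcons ?andbF.
Qed.

Lemma reached_rcons n b ys x :
  reached n b (rcons ys x) = reached n b ys + reached_exactly n b (rcons ys x) :> nat.
Proof.
rewrite /reached /reached_exactly size_rcons.
case: run_rconsP => [b' l r _| |b'] //=.
  by rewrite (inj_eq Some_inj) xpair_eqE rcons_eq_nil andbF addn0.
by rewrite (inj_eq Some_inj) !xpair_eqE !eqxx !andbT.
Qed.

Lemma reachedS_rcons n b c ys x : reached n.+1 (rcons b c) (rcons ys x) =
  reached n.+1 (rcons b c) ys + pending n b ys * outputs c (draw p b (size ys) [:: x])
  + reached_exactly n b (rcons ys x) * outputs c (round p b (size ys).+1 [::]) :> nat.
Proof.
rewrite !reachedS /pending /reached_exactly size_rcons.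
case: run_rconsP => [b' l r Hsize| |b'] //.
  rewrite (inj_eq Some_inj) xpair_eqE rcons_eq_nil andbF addn0.
  case: eqP => [->|_] //; case Er: (round p b l r) => [[[c' l'] r']|].
    by rewrite -[rcons r x]cats1 (round_cat _ Er) addn0.
  by rewrite (round_rcons _ Er) Hsize add0n mul1n.
by rewrite (inj_eq Some_inj) !xpair_eqE !eqxx !andbT; case: eqP => [->|_] /=; rewrite ?mul0n ?mul1n.
Qed.

Lemma pending_rcons n b ys x : pending n b (rcons ys x) =
  pending n b ys * (draw p b (size ys) [:: x] == None)
  + reached_exactly n b (rcons ys x) * (round p b (size ys).+1 [::] == None) :> nat.
Proof.
rewrite /pending /reached_exactly size_rcons.
case: run_rconsP => [b' l r Hsize| |b'] //.
  rewrite (inj_eq Some_inj) xpair_eqE rcons_eq_nil andbF addn0.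
  case: eqP => [->|_] //; case Er: (round p b l r) => [[[c' l'] r']|].
    by rewrite -[rcons r x]cats1 (round_cat _ Er).
  by rewrite (round_rcons _ Er) Hsize mul1n.
by rewrite (inj_eq Some_inj) !xpair_eqE !eqxx !andbT; case: eqP => [->|_] /=; rewrite ?mul0n ?mul1n.
Qed.

Lemma reached_exactly_nil n b : reached_exactly n b [::] = reached n b [::].
Proof.
rewrite /reached_exactly /reached; case Er: (run p n [::]) => [[[b' l] r]|] //.
by case: (run_nil Er) => -> ->; rewrite (inj_eq Some_inj) !xpair_eqE !eqxx !andbT.
Qed.

Lemma reachedS_nil n b c :
  reached n.+1 (rcons b c) [::] = reached n b [::] && outputs c (round p b 0 [::]).
Proof.
rewrite reachedS /reached; case Er: (run p n [::]) => [[[b' l] r]|] //.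
by case: (run_nil Er) => -> ->; case: eqP => [->|].
Qed.

Lemma pending_nil n b :
  pending n b [::] = reached n b [::] && (round p b 0 [::] == None).
Proof.
rewrite /pending /reached; case Er: (run p n [::]) => [[[b' l] r]|] //.
by case: (run_nil Er) => -> ->; case: eqP => [->|].
Qed.

Lemma outputs_draw_single b k c :
  outputs c (draw p b k [:: false]) + outputs c (draw p b k [:: true])
  = digit (p (rcons b c)) k.+1.
Proof. by rewrite /=; case: c; do 2!case: digit. Qed.

Lemma draw_single_None b k :
  (draw p b k [:: false] == None) + (draw p b k [:: true] == None)
  = ~~ digit (p (rcons b false)) k.+1 + ~~ digit (p (rcons b true)) k.+1.
Proof. by rewrite /=; do 2!case: digit. Qed.

Lemma outputs_round_nil b k c : outputs c (round p b k [::])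
  = digit (p (rcons b c)) k && ~~ digit (p (rcons b (~~ c))) k.
Proof. by rewrite /round /=; case: c; do 2!case: digit. Qed.

Lemma round_nil_None b k : (round p b k [::] == None)
  = (digit (p (rcons b false)) k == digit (p (rcons b true)) k).
Proof. by rewrite /round /=; do 2!case: digit. Qed.

Lemma count_reached_bitstringsS n b j :
  count (reached n b) (bitstrings j.+1) =
  2 * count (reached n b) (bitstrings j) + count (reached_exactly n b) (bitstrings j.+1).
Proof.
rewrite !count_bitstringsS count_sum big_distrr -big_split /=.
by apply: eq_bigr => s _; rewrite !reached_rcons; ring.
Qed.

Lemma count_reachedS_bitstringsS n b c j :
  count (reached n.+1 (rcons b c)) (bitstrings j.+1) =
  2 * count (reached n.+1 (rcons b c)) (bitstrings j)
  + count (pending n b) (bitstrings j) * digit (p (rcons b c)) j.+1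
  + count (reached_exactly n b) (bitstrings j.+1) * outputs c (round p b j.+1 [::]).
Proof.
rewrite !count_bitstringsS !count_sum big_distrr !big_distrl -!big_split /=.
apply: eq_big_seq => s; rewrite mem_bitstrings => /eqP <-.
by rewrite !reachedS_rcons -outputs_draw_single; ring.
Qed.

Lemma count_pending_bitstringsS n b j :
  count (pending n b) (bitstrings j.+1) =
  count (pending n b) (bitstrings j)
    * (~~ digit (p (rcons b false)) j.+1 + ~~ digit (p (rcons b true)) j.+1)
  + count (reached_exactly n b) (bitstrings j.+1) * (round p b j.+1 [::] == None).
Proof.
rewrite !count_bitstringsS !count_sum !big_distrl -!big_split /=.
apply: eq_big_seq => s; rewrite mem_bitstrings => /eqP <-.
by rewrite !pending_rcons -draw_single_None; ring.
Qed.

End Rounds.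

Section DyadicFloor.
Variable R : realType.
Local Open Scope ring_scope.

Definition dfloor (z : R) j : int := Num.floor (z * 2 ^+ j).

Lemma dfloorS z j : dfloor z j.+1 = dfloor z j * 2 + digit z j.+1.
Proof.
rewrite /dfloor /digit exprSr mulrA; set y := z * 2 ^+ j.
have two : (2%:~R : R) = 2 by [].
have := floor_itv y; rewrite rmorphD /= => /andP[y_ge y_lt].
have lo : Num.floor y * 2 <= Num.floor (y * 2).
  by rewrite floor_ge_int rmorphM /= two; lra.
have hi : Num.floor (y * 2) < Num.floor y * 2 + 2.
  by rewrite floor_lt_int rmorphD rmorphM /= two; lra.
have [->|->] : Num.floor (y * 2) = Num.floor y * 2 \/
               Num.floor (y * 2) = Num.floor y * 2 + 1 by lia.
  by rewrite modzMl addr0.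
by rewrite modzMDl.
Qed.

Lemma dfloorD x y j : 0 <= dfloor (x + y) j - dfloor x j - dfloor y j <= 1.
Proof.
rewrite /dfloor mulrDl; set a := x * 2 ^+ j; set c := y * 2 ^+ j.
have := floor_itv a; have := floor_itv c; rewrite !rmorphD /= => /andP[? ?] /andP[? ?].
have lo : Num.floor a + Num.floor c <= Num.floor (a + c).
  by rewrite floor_ge_int rmorphD /=; lra.
have hi : Num.floor (a + c) < Num.floor a + Num.floor c + 2.
  by rewrite floor_lt_int !rmorphD /=; lra.
by move: lo hi; move: (Num.floor (a + c)) (Num.floor a) (Num.floor c) => u v w; lia.
Qed.

Lemma dfloor0 z : 0 <= z <= 1 -> dfloor z 0 = digit z 0.
Proof.
rewrite /dfloor /digit expr0 mulr1 => /andP[z_ge0 z_le1].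
have [->|z_neq1] := eqVneq z 1; first by rewrite floor1.
have -> : Num.floor z = 0 by apply: floor_def; rewrite add0r z_ge0 lt_neqAle z_neq1.
by [].
Qed.

Lemma dfloor1 j : dfloor 1 j = (2 ^ j)%N.
Proof.
rewrite /dfloor mul1r.
have -> : (2 : R) ^+ j = ((2 ^ j)%N : int)%:~R by rewrite -natrX.
by rewrite intrKfloor.
Qed.

End DyadicFloor.

Local Open Scope ring_scope.

(* One step of the carry recursion: [P] is the carry at level j, [d] and [e c]
   are the digits of p(b) and p(bc) at level j + 1, and the second hypothesis
   says that the carry at level j + 1 is again 0 or 1. *)
Lemma carry_digits (P : int) (d : bool) (e : bool -> bool) :
  0 <= P <= 1 -> 0 <= 2 * P + d%:Z - (e false)%:Z - (e true)%:Z <= 1 ->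
  (forall c, P * (e c)%:Z + d%:Z * (e c && ~~ e (~~ c))%:Z = (e c)%:Z) /\
  P * (~~ e false + ~~ e true)%:Z + d%:Z * (e false == e true)%:Z
    = 2 * P + d%:Z - (e false)%:Z - (e true)%:Z.
Proof.
move=> /andP[P_ge0 P_le1] /andP[lo hi]; split; first case=> /=.
all: by move: lo hi; move: (e false) (e true) d => [] [] [] /=; lia.
Qed.

Section GenOptCounts.
Variables (R : realType) (p : seq bool -> R).
Hypothesis p_bcpd : bcpd p.

Definition carry b j : int :=
  dfloor (p b) j - dfloor (p (rcons b false)) j - dfloor (p (rcons b true)) j.

Lemma carry_bound b j : 0 <= carry b j <= 1.
Proof. by rewrite /carry; case: p_bcpd => _ [_ ->]; exact: dfloorD. Qed.

Lemma dfloor_p0 b : dfloor (p b) 0 = (digit (p b) 0)%:Z.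
Proof. by case: p_bcpd => _ [p01 _]; exact: dfloor0. Qed.

Lemma carry0 b : carry b 0 =
  (digit (p b) 0)%:Z - (digit (p (rcons b false)) 0)%:Z - (digit (p (rcons b true)) 0)%:Z.
Proof. by rewrite /carry !dfloor_p0. Qed.

Lemma carryS b j : carry b j.+1 = 2 * carry b j + (digit (p b) j.+1)%:Z
  - (digit (p (rcons b false)) j.+1)%:Z - (digit (p (rcons b true)) j.+1)%:Z.
Proof. by rewrite /carry !dfloorS; ring. Qed.

Lemma count_reached_exactly_of_reached n b :
  (forall j, (count (reached p n b) (bitstrings j))%:Z = dfloor (p b) j) ->
  forall j, count (reached_exactly p n b) (bitstrings j) = digit (p b) j.
Proof.
move=> count_b [|j].
  by have := count_b 0; rewrite /= !addn0 reached_exactly_nil dfloor_p0 => -[].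
apply/eqP; rewrite -eqz_nat; apply/eqP.
have := count_b j.+1; rewrite count_reached_bitstringsS dfloorS -count_b; lia.
Qed.

Lemma count_round n b :
  (forall j, (count (reached p n b) (bitstrings j))%:Z = dfloor (p b) j) ->
  forall j,
    (forall c, (count (reached p n.+1 (rcons b c)) (bitstrings j))%:Z = dfloor (p (rcons b c)) j)
    /\ (count (pending p n b) (bitstrings j))%:Z = carry b j.
Proof.
move=> count_b; have count_ex := count_reached_exactly_of_reached count_b.
have P01 : 0 <= (0 : int) <= 1 by [].
elim=> [|j [IHc IHpend]].
  (* Nothing is pending before the first bit: level 0 is a step from carry 0. *)
  have reached_nil : reached p n b [::] = digit (p b) 0 :> nat.
    by have := count_ex 0; rewrite /= addn0 reached_exactly_nil.
  have bound : 0 <= 2 * 0 + (digit (p b) 0)%:Z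
      - (digit (p (rcons b false)) 0)%:Z - (digit (p (rcons b true)) 0)%:Z <= 1.
    by rewrite mulr0 add0r -carry0 carry_bound.
  have [out_c pend] := carry_digits (e := fun c => digit (p (rcons b c)) 0) P01 bound.
  split=> [c|]; rewrite /= !addn0 ?reachedS_nil ?pending_nil -mulnb reached_nil PoszM.
    by rewrite dfloor_p0 outputs_round_nil -(out_c c) mul0r add0r.
  by rewrite carry0 round_nil_None; move: pend; rewrite mul0r mulr0 !add0r.
have bound := carry_bound b j.+1; rewrite carryS in bound.
have [out_c pend] := carry_digits (e := fun c => digit (p (rcons b c)) j.+1) (carry_bound b j) bound.
split=> [c|].
  rewrite count_reachedS_bitstringsS !PoszD !PoszM IHc IHpend count_ex outputs_round_nil dfloorS.
  by move: (out_c c) => /=; lia.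
by rewrite count_pending_bitstringsS PoszD !PoszM IHpend count_ex round_nil_None carryS.
Qed.

Lemma count_reached n b : size b = n ->
  forall j, (count (reached p n b) (bitstrings j))%:Z = dfloor (p b) j.
Proof.
elim: n b => [|n IHn] b.
  move/size0nil => -> j; case: p_bcpd => -> _.
  by rewrite dfloor1 (@eq_count _ _ predT) ?count_predT ?size_bitstrings // => s; rewrite /reached.
case/lastP: b => [//|b c]; rewrite size_rcons => -[/IHn count_b] j.
by case: (count_round count_b j) => ->.
Qed.

Lemma count_reached_exactly n b j : size b = n ->
  count (reached_exactly p n b) (bitstrings j) = digit (p b) j.
Proof. by move/count_reached/count_reached_exactly_of_reached. Qed.

End GenOptCounts.

Theorem theoremC4 (R : realType) (p : seq bool -> R) (hp : bcpd p)
    (n : nat) (hn : (1 <= n)%N) (s : n.-tuple bool) (l : nat) :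
  prob_BC p n s l = (2 ^+ l)^-1 * (if digit (p s) l then 1 else 0).
Proof.
rewrite /prob_BC (card_tuple_bitstrings l (fun xs => run p n xs == Some (s : seq bool, l, [::]))).
rewrite (@eq_in_count _ _ (reached_exactly p n s)); last first.
  by move=> xs; rewrite mem_bitstrings /reached_exactly => /eqP ->.
by rewrite count_reached_exactly ?size_tuple // mulrC; case: digit.
Qed.
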